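(* Let $P$ be a finite poset and let $I\in\mathcal{IC}(P)$ contain all maximal elements of $P$. Then $\mathrm{Row}(I)=P-I$.
   Context: All posets are finite. For a poset $P$, a subset $I\subseteq P$ is interval-closed if for all $x,y\in I$ and $z\in P$ with $x\le z\le y$ we have $z\in I$; $\mathcal{IC}(P)$ is the set of interval-closed subsets of $P$. For $x\in P$ the toggle $t_x:\mathcal{IC}(P)\to\mathcal{IC}(P)$ is defined by $t_x(I)=I\triangle\{x\}$ if $I\triangle\{x\}\in\mathcal{IC}(P)$ and $t_x(I)=I$ otherwise. Rowmotion is $\mathrm{Row}=t_{x_1}\circ t_{x_2}\circ\cdots\circ t_{x_N}:\mathcal{IC}(P)\to\mathcal{IC}(P)$, where $(x_1,\dots,x_N)$ is a linear extension of $P$ (so elements are toggled from the top of the poset down); this does not depend on the choice of linear extension. *)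

From mathcomp Require Import all_boot all_order.
Set Implicit Arguments.
Unset Strict Implicit.
Unset Printing Implicit Defensive.
Import Order.Theory.
Local Open Scope order_scope.

Section IC.
Context {d : Order.disp_t} {T : finPOrderType d}.

Definition interval_closed (I : {set T}) : Prop :=
  forall x y z : T, x \in I -> y \in I -> x <= z -> z <= y -> z \in I.

Definition interval_closedb (I : {set T}) : bool :=
  [forall x, forall y, forall z,
     [&& x \in I, y \in I, x <= z & z <= y] ==> (z \in I)].

Definition toggle (x : T) (I : {set T}) : {set T} :=
  let J := if x \in I then I :\ x else x |: I in
  if interval_closedb J then J else I.

Definition linear_extension (s : seq T) : Prop :=
  [/\ uniq s, (forall x : T, x \in s) &
      (forall x y : T, x < y -> (index x s < index y s)%N)].

(* Row = t_{x_1} o t_{x_2} o ... o t_{x_N}  (t_{x_N} applied first) *)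
Definition rowmotion (s : seq T) (I : {set T}) : {set T} :=
  foldr toggle I s.

Definition maximal (x : T) : Prop := forall y : T, ~ (x < y).

End IC.

From mathcomp Require Import all_boot all_order.
Set Implicit Arguments.
Unset Strict Implicit.
Unset Printing Implicit Defensive.
Import Order.Theory.
Local Open Scope order_scope.

(* The proof tracks the symmetric difference I (+) U, where
   U is the set of elements toggled so far:
   - an interval-closed set containing all maximal elements is an up-set,
     because every element lies below some maximal element;
   - a suffix of a linear extension is an up-set, and the symmetric difference
     of two up-sets is interval-closed;
   - hence, toggling the elements of s from the last one down, every toggle
     t_x succeeds and turns I (+) U into I (+) (x |: U);
   - after the whole of s we reach I (+) P = P - I. *)

Section UpSetsAndToggles.
Context {d : Order.disp_t} {T : finPOrderType d}.

Definition upper_set (U : {set T}) : Prop :=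
  forall y z : T, y \in U -> y <= z -> z \in U.

Definition symdiff (I U : {set T}) : {set T} := (I :\: U) :|: (U :\: I).

(* In a finite poset every element lies below a maximal one: climb strictly
   upwards, which shrinks the (finite) principal up-set. *)
Lemma exists_maximal_above (b : T) : exists2 m : T, b <= m & maximal m.
Proof.
move: {2}#|[set z | b <= z]| (leqnn #|[set z | b <= z]|) => n.
elim: n b => [|n IHn] b card_up.
  by move: card_up; rewrite leqn0 => /eqP /card0_eq /(_ b); rewrite inE lexx.
have [/existsP [c lt_bc] | no_above] := boolP [exists c, b < c]; last first.
  by exists b => // y lt_by; case/existsP: no_above; exists y.
have up_c_proper : [set z | c <= z] \proper [set z | b <= z].
  apply/properP; split.
    by apply/subsetP => z; rewrite !inE; apply: le_trans (ltW lt_bc).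
  by exists b; rewrite !inE ?lexx // lt_geF.
have [m le_cm max_m] := IHn c (leq_trans (proper_card up_c_proper) card_up).
by exists m => //; apply: le_trans (ltW lt_bc) le_cm.
Qed.

Lemma interval_closed_max_upper (I : {set T}) :
  interval_closed I -> (forall x : T, maximal x -> x \in I) -> upper_set I.
Proof.
move=> icI maxI y z yI le_yz; have [m le_zm max_m] := exists_maximal_above z.
exact: (icI y m z yI (maxI m max_m) le_yz le_zm).
Qed.

Lemma symdiff_interval_closed (I U : {set T}) :
  upper_set I -> upper_set U -> interval_closed (symdiff I U).
Proof.
move=> upI upU a b z; rewrite !inE => ab_a ab_b le_az le_zb.
case/orP: ab_a => [/andP [aNU aI] | /andP [aNI aU]];
  case/orP: ab_b => [/andP [bNU bI] | /andP [bNI bU]].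
- by rewrite (upI a z) //= (contra (fun zU => upU z b zU le_zb)).
- by case/negP: bNI; apply: upI aI (le_trans le_az le_zb).
- by case/negP: bNU; apply: upU aU (le_trans le_az le_zb).
- by rewrite (upU a z) //= (contra (fun zI => upI z b zI le_zb)) ?orbT.
Qed.

Lemma symdiff_setU1 (I U : {set T}) (x : T) : x \notin U ->
  symdiff I (x |: U) =
  if x \in symdiff I U then symdiff I U :\ x else x |: symdiff I U.
Proof.
move=> xU; apply/setP => y.
case: ifPn; rewrite !inE (negbTE xU) andbF orbF /= => xI;
  by have [->|_] := eqVneq y x; rewrite /= ?xI ?(negbTE xI) ?(negbTE xU).
Qed.

Lemma toggle_flip (x : T) (J : {set T}) :
  interval_closed (if x \in J then J :\ x else x |: J) ->
  toggle x J = if x \in J then J :\ x else x |: J.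
Proof.
move=> icJ; rewrite /toggle; cbv zeta.
suff -> : interval_closedb (if x \in J then J :\ x else x |: J) by [].
apply/forallP => a; apply/forallP => b; apply/forallP => z.
by apply/implyP => /and4P [aJ bJ le_az le_zb]; apply: (icJ a b).
Qed.

End UpSetsAndToggles.

Section LinearExtension.
Context {d : Order.disp_t} {T : finPOrderType d}.
Variable s : seq T.
Hypothesis ext_s : linear_extension s.

Lemma suffix_upper_set (p t : seq T) :
  s = p ++ t -> upper_set [set y in t].
Proof.
case: ext_s => uniq_s all_s index_lt s_pt y z; rewrite !inE => yt le_yz.
have [<- //|ne_yz] := eqVneq y z.
have /index_lt : y < z by rewrite lt_neqAle ne_yz.
have yp : y \notin p.
  apply: contraL uniq_s => yp; rewrite s_pt cat_uniq.
  by apply/and3P => -[_ /hasP []]; exists y.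
rewrite s_pt !index_cat (negbTE yp); have := all_s z; rewrite s_pt mem_cat.
case/orP => [zp|//]; rewrite zp => /leq_trans /(_ (index_size z p)).
by rewrite ltnNge leq_addr.
Qed.

Lemma toggle_suffix (I : {set T}) (t p : seq T) :
  upper_set I -> s = p ++ t -> foldr toggle I t = symdiff I [set y in t].
Proof.
case: ext_s => uniq_s _ _ upI; elim: t p => [|x t IHt] p s_pt.
  by apply/setP => y; rewrite !inE in_nil andbF orbF.
have s_pxt : s = rcons p x ++ t by rewrite cat_rcons.
have xt : x \notin [set y in t].
  by move: uniq_s; rewrite s_pt cat_uniq inE => /and3P [_ _ /andP []].
have set_cons : [set y in x :: t] = x |: [set y in t].
  by apply/setP => y; rewrite !inE.
have up_xt : upper_set (x |: [set y in t]).
  by rewrite -set_cons; apply: suffix_upper_set s_pt.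
rewrite set_cons /= (IHt _ s_pxt) symdiff_setU1 //; apply: toggle_flip.
by rewrite -symdiff_setU1 //; apply: symdiff_interval_closed.
Qed.

End LinearExtension.

Theorem lemma2p9 (d : Order.disp_t) (T : finPOrderType d) (s : seq T)
    (I : {set T}) :
  linear_extension s ->
  interval_closed I ->
  (forall x : T, maximal x -> x \in I) ->
  rowmotion s I = ~: I.
Proof.
move=> ext_s icI maxI.
have upI := interval_closed_max_upper icI maxI.
rewrite /rowmotion (toggle_suffix ext_s (p := [::]) upI) //.
have [_ all_s _] := ext_s.
by apply/setP => y; rewrite !inE all_s /= andbT; case: (y \in I).
Qed.
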